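(* For every setoid $A$, every setoid family $B$ over $A$, every setoid $C$ and every extensional function $a_C : P_B\,C \Rightarrow C$ (i.e. every $P_B$-algebra), the type \[ \sum_{h : \mathsf{Alg}_B(\mathsf{s},a_C)} \ \prod_{h' : \mathsf{Alg}_B(\mathsf{s},a_C)} h \approx h' \] is inhabited; that is, $(W,\mathsf{s})$ is an initial $P_B$-algebra in the category of setoids.
   Context: Setting: intensional Martin-Löf type theory with $\Pi$-types, record types and a universe $\mathsf{U}$ (à la Russell) closed under $\Pi$-types and containing intensional $\Sigma$-types, intensional identity types, the unit type, W-types and dependent W-types. Logic is propositions-as-types: a statement holds when the corresponding type has an inhabitant. For $A:\mathsf U$, $B:A\to\mathsf U$, the W-type $\mathsf W(A,B):\mathsf U$ has constructor $\mathsf{sup}\,a\,f$ (for $a:A$, $f:B\,a\to\mathsf W(A,B)$) and the usual dependent eliminator with computation rule; there are $\mathsf n:\mathsf W(A,B)\to A$ and $\mathsf b:\prod_w B(\mathsf n\,w)\to\mathsf W(A,B)$ with $\mathsf n(\mathsf{sup}\,a\,f)\equiv a$, $\mathsf b(\mathsf{sup}\,a\,f)\equiv f$. For $I:\mathsf U$, $X:I\to\mathsf U$, $Y:\prod_i X\,i\to\mathsf U$, $d:\prod_i\prod_{x:X\,i}Y\,i\,x\to I$, the dependent W-type $\mathsf{DW}_{I,X,Y,d}:I\to\mathsf U$ has constructor $\mathsf{dsup}\,i\,x\,f:\mathsf{DW}\,i$ for $f:\prod_{y:Y\,i\,x}\mathsf{DW}(d\,i\,x\,y)$, with the usual dependent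 eliminator and computation rule. A setoid $X$ is a tuple $(X_0,\approx_X,r,s,t)$ with $X_0:\mathsf U$, $\approx_X:X_0\to X_0\to\mathsf U$ and terms $r,s,t$ witnessing reflexivity, symmetry, transitivity; $x:X$ means $x:X_0$. An extensional function $f:X\Rightarrow Y$ is a pair of $f_0:X_0\to Y_0$ and a term of $\prod_{x,x'}x\approx_X x'\to f_0x\approx_Y f_0x'$; these form a setoid $X\Rightarrow Y$ with $f\approx g:=\prod_x f_0x\approx_Y g_0x$; composition is $g\circ f$. A setoid family $B$ over a setoid $A$ assigns to each $a:A$ a setoid $B\,a$ and to each $\alpha:a\approx_A a'$ an extensional function $B_\alpha:B\,a\Rightarrow B\,a'$, respecting identities and composition up to $\approx$, with $B_\alpha\approx B_{\alpha'}$ for all $\alpha,\alpha':a\approx_Aa'$. Write $b\approx_\alpha b'$ for $B_\alpha b\approx_{B\,a'}b'$. The polynomial functor $P_B$ sends a setoid $X$ to the setoid with underlying type $\sum_{a:A}(B\,a\Rightarrow X)$ and $(a,k)\approx(a',k'):=\sum_{\alpha:a\approx_Aa'}k\approx k'\circ B_\alpha$, and $f:X\Rightarrow Y$ to $P_Bf(a,k):=(a,f\circ k)$. The setoid $W$: let $A_0$, $B_0\,a$ be the underlying types of $A$, $B\,a$ and $\mathsf W:=\mathsf W(A_0,B_0)$. Define $\approx^B w\,w':=\mathsf{DW}_{I,X,Y,d}(w,w')$ where $I:=\mathsf W\times\mathsf W$, $X(w,w'):=\mathsf n\,w\approx_A\mathsf n\,w'$, $Y(w,w')\,\alpha:=\sum_{b:B_0(\mathsf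 n w)}\sum_{b':B_0(\mathsf n w')}b\approx_\alpha b'$, $d\,(w,w')\,\alpha\,(b,b',\beta):=(\mathsf b\,w\,b,\mathsf b\,w'\,b')$. $W$ is the setoid with underlying type $\sum_{w:\mathsf W}\approx^B w\,w$ and $(w,\_)\approx_W(w',\_):=\approx^B w\,w'$. The algebra map $\mathsf s:P_BW\Rightarrow W$ sends $(a,f)$ to the tree $\mathsf{sup}\,a\,f_0$ (with $f_0$ the underlying function of $f$, composed with first projection), together with the canonical proof that it is extensional; $\mathsf s$ is an extensional function. $\mathsf{Alg}_B(\mathsf s,a_C)$ is the setoid of algebra morphisms: underlying type $\sum_{h:W\Rightarrow C}h\circ\mathsf s\approx a_C\circ(P_Bh)$, with $(h,\_)\approx(h',\_):=h\approx h'$. *)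

(* The universe U is rendered as Rocq's Type; "a type is inhabited" is rendered
   by giving (constructively) an element of it, i.e. sigT / Type-valued records. *)

Record Setoid := MkSetoid {
  car :> Type;
  eqv : car -> car -> Type;
  srefl : forall x, eqv x x;
  ssym : forall x y, eqv x y -> eqv y x;
  strans : forall x y z, eqv x y -> eqv y z -> eqv x z }.
Arguments eqv {s} _ _.
Arguments srefl {s} x.
Arguments ssym {s x y} _.
Arguments strans {s x y z} _ _.

Record Fn (X Y : Setoid) := MkFn {
  ap :> car X -> car Y;
  ap_ext : forall x x', eqv x x' -> eqv (ap x) (ap x') }.
Arguments MkFn {X Y} _ _.
Arguments ap {X Y} _ _.
Arguments ap_ext {X Y} f {x x'} _.

Definition FnS (X Y : Setoid) : Setoid :=
  @MkSetoid (Fn X Y) (fun f g => forall x, eqv (f x) (g x))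
    (fun f x => srefl (f x))
    (fun f g H x => ssym (H x))
    (fun f g h H G x => strans (H x) (G x)).

Definition comp {X Y Z : Setoid} (g : Fn Y Z) (f : Fn X Y) : Fn X Z :=
  MkFn (fun x => g (f x)) (fun x x' e => ap_ext g (ap_ext f e)).

Record Fam (A : Setoid) := MkFam {
  fib :> car A -> Setoid;
  tr : forall a a' : car A, eqv a a' -> Fn (fib a) (fib a');
  tr_id : forall a (x : fib a), eqv (tr a a (srefl a) x) x;
  tr_comp : forall a a' a'' (p : eqv a a') (q : eqv a' a'') (x : fib a),
      eqv (tr a a'' (strans p q) x) (tr a' a'' q (tr a a' p x));
  tr_irr : forall a a' (p q : eqv a a') (x : fib a), eqv (tr a a' p x) (tr a a' q x) }.
Arguments fib {A} _ _.
Arguments tr {A} f {a a'} p : rename.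
Arguments tr_id {A} f {a} x : rename.
Arguments tr_comp {A} f {a a' a''} p q x.
Arguments tr_irr {A} f {a a'} p q x.

Lemma trK {A : Setoid} (B : Fam A) {a a' : car A} (p : eqv a a') (b' : B a') :
  eqv (tr B p (tr B (ssym p) b')) b'.
Proof.
  exact (strans (ssym (tr_comp B (ssym p) p b'))
           (strans (tr_irr B _ (srefl a') b') (tr_id B b'))).
Defined.

Definition PFcar {A : Setoid} (B : Fam A) (X : Setoid) : Type :=
  { a : car A & Fn (B a) X }.

Definition PFeqv {A : Setoid} (B : Fam A) (X : Setoid) (u v : PFcar B X) : Type :=
  { p : eqv (projT1 u) (projT1 v) &
    forall b, eqv (projT2 u b) (projT2 v (tr B p b)) }.

Definition PFrefl {A : Setoid} (B : Fam A) (X : Setoid) (u : PFcar B X) : PFeqv B X u u :=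
  existT _ (srefl (projT1 u)) (fun b => ap_ext (projT2 u) (ssym (tr_id B b))).

Definition PFsym {A : Setoid} (B : Fam A) (X : Setoid) (u v : PFcar B X) :
  PFeqv B X u v -> PFeqv B X v u.
Proof.
  intros [p H]. exists (ssym p). intro b'.
  exact (strans (ap_ext (projT2 v) (ssym (trK B p b'))) (ssym (H (tr B (ssym p) b')))).
Defined.

Definition PFtrans {A : Setoid} (B : Fam A) (X : Setoid) (u v w : PFcar B X) :
  PFeqv B X u v -> PFeqv B X v w -> PFeqv B X u w.
Proof.
  intros [p H] [q G]. exists (strans p q). intro b.
  exact (strans (H b) (strans (G (tr B p b))
           (ap_ext (projT2 w) (ssym (tr_comp B p q b))))).
Defined.

Definition PF {A : Setoid} (B : Fam A) (X : Setoid) : Setoid :=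
  @MkSetoid (PFcar B X) (PFeqv B X) (PFrefl B X) (PFsym B X) (PFtrans B X).

Definition PFmap {A : Setoid} (B : Fam A) {X Y : Setoid} (f : Fn X Y) :
  Fn (PF B X) (PF B Y).
Proof.
  refine (MkFn (X := PF B X) (Y := PF B Y) (fun u : PFcar B X => existT _ (projT1 u) (comp f (projT2 u))) _).
  intros u v [p H]. exists p. intro b. exact (ap_ext f (H b)).
Defined.

Inductive Wt (A0 : Type) (B0 : A0 -> Type) : Type :=
  sup : forall a : A0, (B0 a -> Wt A0 B0) -> Wt A0 B0.
Arguments sup {A0 B0} a f.

Definition nW {A0 : Type} {B0 : A0 -> Type} (w : Wt A0 B0) : A0 :=
  match w with sup a _ => a end.
Definition bW {A0 : Type} {B0 : A0 -> Type} (w : Wt A0 B0) : B0 (nW w) -> Wt A0 B0 :=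
  match w with sup _ f => f end.

Inductive DW (I : Type) (X : I -> Type) (Y : forall i, X i -> Type)
    (d : forall i (x : X i), Y i x -> I) : I -> Type :=
  dsup : forall i (x : X i), (forall y : Y i x, DW I X Y d (d i x y)) -> DW I X Y d i.
Arguments dsup {I X Y d} i x f.

Section WSetoid.
Context {A : Setoid} (B : Fam A).

Definition W0 : Type := Wt (car A) (fun a => car (B a)).
Definition WI : Type := (W0 * W0)%type.
Definition WX (p : WI) : Type := eqv (nW (fst p)) (nW (snd p)).
Definition WY (p : WI) (al : WX p) : Type :=
  { b : car (B (nW (fst p))) & { b' : car (B (nW (snd p))) & eqv (tr B al b) b' } }.
Definition Wd (p : WI) (al : WX p) (y : WY p al) : WI :=
  (bW (fst p) (projT1 y), bW (snd p) (projT1 (projT2 y))).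

Definition eqB (w w' : W0) : Type := DW WI WX WY Wd (w, w').

Lemma eqB_sym_gen : forall p : WI, DW WI WX WY Wd p -> DW WI WX WY Wd (snd p, fst p).
Proof.
  intros p e. induction e as [i x f IH].
  apply (dsup (snd i, fst i) (ssym x)).
  intros [b' [b bt]]. simpl in *.
  exact (IH (existT _ b (existT _ b'
          (strans (ap_ext (tr B x) (ssym bt)) (trK B x b'))))).
Defined.

Lemma eqB_trans_gen : forall p : WI, DW WI WX WY Wd p ->
  forall q : WI, DW WI WX WY Wd q -> fst q = snd p -> DW WI WX WY Wd (fst p, snd q).
Proof.
  intros p e1. induction e1 as [i x f IH]. intros q e2.
  destruct e2 as [j y g]. destruct i as [w w']; destruct j as [v v''].
  simpl. intros E. subst v.
  apply (dsup (w, v'') (strans x y)).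
  intros [b [b'' ga]]. simpl in *.
  exact (IH (existT _ b (existT _ (tr B x b) (srefl _)))
            _ (g (existT _ (tr B x b) (existT _ b'' (strans (ssym (tr_comp B x y b)) ga))))
            eq_refl).
Defined.

Definition Wcar : Type := { w : W0 & eqB w w }.

Definition Wset : Setoid :=
  @MkSetoid Wcar (fun u v => eqB (projT1 u) (projT1 v))
    (fun u => projT2 u)
    (fun u v e => eqB_sym_gen (projT1 u, projT1 v) e)
    (fun u v w e1 e2 => eqB_trans_gen (projT1 u, projT1 v) e1 (projT1 v, projT1 w) e2 eq_refl).

Definition s_tree (u : PFcar B Wset) : W0 :=
  sup (projT1 u) (fun b => projT1 (projT2 u b)).

Definition s_refl (u : PFcar B Wset) : eqB (s_tree u) (s_tree u).
Proof.
  destruct u as [a f]. unfold eqB, s_tree.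
  apply (dsup (sup a (fun b => projT1 (f b)), sup a (fun b => projT1 (f b))) (srefl a)).
  intros [b [b' be]]. simpl in *.
  exact (ap_ext f (strans (ssym (tr_id B b)) be)).
Defined.

Definition s_ext (u v : PFcar B Wset) : PFeqv B Wset u v -> eqB (s_tree u) (s_tree v).
Proof.
  destruct u as [a f]; destruct v as [a' f']. intros [p H]. simpl in *.
  unfold eqB, s_tree. simpl.
  apply (dsup (sup a (fun b => projT1 (f b)), sup a' (fun b => projT1 (f' b))) p).
  intros [b [b' be]]. simpl in *.
  exact (@strans Wset _ _ _ (H b) (ap_ext f' be)).
Defined.

Definition s_alg : Fn (PF B Wset) Wset :=
  MkFn (X := PF B Wset) (Y := Wset) (fun u : PFcar B Wset => existT (fun w => eqB w w) (s_tree u) (s_refl u) : Wcar) s_ext.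

End WSetoid.

Definition AlgCar {A : Setoid} (B : Fam A) (C : Setoid) (aC : Fn (PF B C) C) : Type :=
  { h : Fn (Wset B) C &
    @eqv (FnS (PF B (Wset B)) C) (comp h (s_alg B)) (comp aC (PFmap B h)) }.

Definition Alg {A : Setoid} (B : Fam A) (C : Setoid) (aC : Fn (PF B C) C) : Setoid :=
  @MkSetoid (AlgCar B C aC)
    (fun h h' => @eqv (FnS (Wset B) C) (projT1 h) (projT1 h'))
    (fun h => srefl (s := FnS (Wset B) C) (projT1 h))
    (fun h h' e => ssym (s := FnS (Wset B) C) e)
    (fun h h' h'' e1 e2 => strans (s := FnS (Wset B) C) e1 e2).


(* The initial morphism is the fold of [aC] along trees. A tree only carries a
   proof of its own self-equality, which is needed to make the recursive
   calls extensional, so the fold is introduced through its graph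
   [fold_graph w c]: the graph sends ≈^B-related trees to ≈_C-related values,
   it is total on well-formed trees, and every algebra morphism lies in it.
   The first fact makes the fold well defined and extensional, the last two
   give that it is a morphism and that any morphism equals it. *)

Section Initiality.
Context {A : Setoid} (B : Fam A).

Definition eqB_sym {w w'} (e : eqB B w w') : eqB B w' w :=
  eqB_sym_gen B (w, w') e.

Definition eqB_trans {w w' w''} (e : eqB B w w') (e' : eqB B w' w'') : eqB B w w'' :=
  eqB_trans_gen B (w, w') e (w', w'') e' eq_refl.

Definition eqB_inv (p : WI B) (e : DW (WI B) (WX B) (WY B) (Wd B) p) :
  { x : WX B p & forall b b', eqv (tr B x b) b' -> eqB B (bW (fst p) b) (bW (snd p) b') }.
Proof.
  destruct e as [i x g]. exists x.
  intros b b' be. exact (g (existT _ b (existT _ b' be))).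
Defined.

(* Both subtrees are compared with the common subtree [bW w (tr x b')]. *)
Definition eqB_refl_bW (w : W0 B) (e : eqB B w w) (b b' : B (nW w)) (bb : eqv b b') :
  eqB B (bW w b) (bW w b').
Proof.
  destruct (eqB_inv (w, w) e) as [x G]; simpl in G.
  exact (eqB_trans (G b _ (ap_ext (tr B x) bb)) (eqB_sym (G b' _ (srefl _)))).
Defined.

Definition subtrees (a : car A) (f : B a -> W0 B) (e : eqB B (sup a f) (sup a f)) :
  Fn (B a) (Wset B) :=
  MkFn (X := B a) (Y := Wset B)
    (fun b => existT (fun w => eqB B w w) (f b) (eqB_refl_bW (sup a f) e b b (srefl b)))
    (eqB_refl_bW (sup a f) e).

Context (C : Setoid) (aC : Fn (PF B C) C).

Fixpoint fold_graph (w : W0 B) (c : car C) : Type :=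
  match w with
  | sup a f => { k : Fn (B a) C &
                 ((forall b, fold_graph (f b) (k b)) * eqv c (aC (existT _ a k)))%type }
  end.

Lemma fold_graph_resp (p : WI B) (e : DW (WI B) (WX B) (WY B) (Wd B) p) (c c' : car C) :
  fold_graph (fst p) c -> fold_graph (snd p) c' -> eqv c c'.
Proof.
  revert c c'. induction e as [[[a f] [a' f']] x g IH].
  simpl in *. intros c c' [k [Hk Ec]] [k' [Hk' Ec']].
  refine (strans Ec (strans _ (ssym Ec'))).
  apply (ap_ext aC). exists x. intro b.
  exact (IH (existT _ b (existT _ (tr B x b) (srefl _))) _ _ (Hk b) (Hk' _)).
Qed.

Definition fold_graph_total (w : W0 B) : eqB B w w -> { c : car C & fold_graph w c }.
Proof.
  induction w as [a f IH]. intro e.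
  set (F := subtrees a f e).
  set (k := MkFn (X := B a) (Y := C) (fun b => projT1 (IH b (projT2 (F b))))
              (fun b b' bb => fold_graph_resp (f b, f b') (ap_ext F bb) _ _
                                (projT2 (IH b _)) (projT2 (IH b' _)))).
  exists (aC (existT _ a k)), k. split.
  - intro b. exact (projT2 (IH b _)).
  - apply srefl.
Defined.

Definition fold : Fn (Wset B) C :=
  MkFn (X := Wset B) (Y := C)
    (fun u => projT1 (fold_graph_total (projT1 u) (projT2 u)))
    (fun u u' e => fold_graph_resp (projT1 u, projT1 u') e _ _
                     (projT2 (fold_graph_total _ _)) (projT2 (fold_graph_total _ _))).

Lemma fold_graph_fold (u : Wset B) (c : car C) : fold_graph (projT1 u) c -> eqv c (fold u).
Proof.
  intro Hc.
  exact (fold_graph_resp (projT1 u, projT1 u) (projT2 u) _ _ Hc (projT2 (fold_graph_total _ _))).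
Qed.

Lemma fold_hom : @eqv (FnS (PF B (Wset B)) C) (comp fold (s_alg B)) (comp aC (PFmap B fold)).
Proof.
  intros [a f]. apply ssym, (fold_graph_fold (s_alg B (existT _ a f))).
  exists (comp fold f). split.
  - intro b. exact (projT2 (fold_graph_total _ _)).
  - apply srefl.
Qed.

(* The tree of [s_alg (a, subtrees a f e)] is [sup a f] up to eta, so [e] itself
   relates the two elements of [Wset B]. *)
Lemma alg_hom_fold_graph (h : Alg B C aC) (w : W0 B) (e : eqB B w w) :
  fold_graph w (projT1 h (existT (fun w => eqB B w w) w e)).
Proof.
  destruct h as [h Hh]; simpl.
  induction w as [a f IH].
  exists (comp h (subtrees a f e)). split.
  - intro b. apply IH.
  - refine (strans _ (Hh (existT _ a (subtrees a f e)))).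
    simpl. apply (ap_ext h). exact e.
Qed.

End Initiality.

Theorem theorem3p18 :
  forall (A : Setoid) (B : Fam A) (C : Setoid) (aC : Fn (PF B C) C),
    { h : Alg B C aC & forall h' : Alg B C aC, eqv h h' }.
Proof.
  intros A B C aC.
  exists (existT _ (fold B C aC) (fold_hom B C aC)).
  intros h' [w e]. apply ssym.
  exact (fold_graph_fold B C aC (existT (fun w => eqB B w w) w e) _ (alg_hom_fold_graph B C aC h' w e)).
Qed.
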